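(* Let $N\ge 2$ and $T\ge 1$, let $U$ be any unitary on the Hilbert space with orthonormal basis $\{|z;i\rangle: z,i\ge 0 \text{ integers}\}$, and let $S\subseteq\{0,1\}^N$ be the set of non-decreasing bit strings $x$ with $x_{N-1}=1$, with $f(x)=\min\{i: x_i=1\}$. For $x\in S$ and $j\ge 0$ let $|\psi_x^j\rangle=(UO_x)^jU|0\rangle$, where $O_x|z;i\rangle=(-1)^{x_i}|z;i\rangle$ for $0\le i<N$ and $O_x|z;i\rangle=|z;i\rangle$ for $i\ge N$. Define the weight $\omega(x,y)=\frac{1}{f(y)-f(x)}$ if $0\le f(x)<f(y)<N$ and $\omega(x,y)=0$ otherwise, and $$W_j=\sum_{x,y\in S}\omega(x,y)\,\langle\psi_x^j|\psi_y^j\rangle.$$ Then for every $j$ with $0\le j<T$, $|W_j-W_{j+1}|\le \pi N$. *)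

From HB Require Import structures.
From mathcomp Require Import all_boot all_order all_algebra.
From mathcomp Require Import all_classical all_reals.
From mathcomp Require Import topology normedtype sequences esum trigo.
From mathcomp Require Import complex.
Set Implicit Arguments. Unset Strict Implicit. Unset Printing Implicit Defensive.
Import Order.TTheory GRing.Theory Num.Theory.
Local Open Scope classical_set_scope.
Local Open Scope ring_scope.

(* Vectors of the Hilbert space l^2 with orthonormal basis |z;i>, z,i >= 0:
   coefficient functions (z,i) |-> amplitude; l2 v says square-summable. *)
Definition state (R : realType) := nat * nat -> R[i].

Definition sqmod (R : realType) (c : R[i]) : R := (complex.Re c) ^+ 2 + (complex.Im c) ^+ 2.

Definition normsq (R : realType) (v : state R) : \bar R :=
  (\esum_(p in [set: nat * nat]) (sqmod (v p))%:E)%E.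

Definition l2 (R : realType) (v : state R) : Prop := (normsq v < +oo)%E.

Definition sumR (R : realType) (g : nat * nat -> R) : R :=
  fine (\esum_(p in [set: nat * nat]) (Num.max (g p) 0)%:E)%E
  - fine (\esum_(p in [set: nat * nat]) (Num.max (- g p) 0)%:E)%E.

Definition inner (R : realType) (v w : state R) : R[i] :=
  Complex (sumR (fun p => complex.Re ((conjc (v p)) * w p)))
          (sumR (fun p => complex.Im ((conjc (v p)) * w p))).

Definition unitary (R : realType) (U : state R -> state R) : Prop :=
  [/\ (forall v, l2 v -> l2 (U v)),
      (forall (a : R[i]) v w, l2 v -> l2 w ->
          U (fun p => a * v p + w p) = (fun p => a * U v p + U w p)),
      (forall v, l2 v -> normsq (U v) = normsq v) &
      (forall w, l2 w -> exists v, l2 v /\ U v = w)].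

Definition ket0 (R : realType) : state R := fun p => if p == (0%N, 0%N) then 1 else 0.

Definition bit (N : nat) (x : {ffun 'I_N -> bool}) (i : nat) : bool :=
  if insub i is Some k then x k else false.

Definition oracle (R : realType) (N : nat) (x : {ffun 'I_N -> bool}) (v : state R) : state R :=
  fun p => if bit x p.2 then - v p else v p.

Definition psi (R : realType) (N : nat) (U : state R -> state R)
    (x : {ffun 'I_N -> bool}) (j : nat) : state R :=
  iter j (fun v => U (oracle x v)) (U (ket0 R)).

Definition inS (N : nat) (x : {ffun 'I_N -> bool}) : bool :=
  [forall i : 'I_N, forall k : 'I_N, (i <= k)%N ==> (x i ==> x k)]
  && [forall i : 'I_N, (i == N.-1 :> nat) ==> x i].

Definition f (N : nat) (x : {ffun 'I_N -> bool}) : nat :=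
  find (fun i : 'I_N => x i) (enum 'I_N).

Definition omega (R : realType) (N : nat) (x y : {ffun 'I_N -> bool}) : R :=
  if (f x < f y)%N && (f y < N)%N then ((f y - f x)%:R)^-1 else 0.

Definition W (R : realType) (N : nat) (U : state R -> state R) (j : nat) : R[i] :=
  \sum_(x : {ffun 'I_N -> bool} | inS x) \sum_(y : {ffun 'I_N -> bool} | inS y)
     (omega R x y)%:C%C * inner (psi U x j) (psi U y j).

(* W_j - W_(j+1) is computed coordinatewise.  Since U preserves inner products,
   W_j - W_(j+1) = sum_(x,y) omega(x,y) (<psi_x|psi_y> - <O_x psi_x|O_y psi_y>), and O_x
   only flips signs, so at a basis coordinate p = |z;i> only the pairs whose bits differ
   at i contribute, namely those with f(x) <= i < f(y), each with 2 conj(psi_x(p)) psi_y(p)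
   / (f(y) - f(x)).  At fixed p this is a Hilbert-type bilinear form across the cut
   i + 1/2; the Schur test with weights sqrt(A/B) bounds it by pi * sum_x |psi_x(p)|^2,
   because each row sum is a midpoint-rule underestimate of
   int_0^oo ds / ((1 + s) sqrt s) = pi (the integrand is convex).  Summing over p, with
   ||psi_x|| = 1 and |S| <= N, gives pi N. *)

From HB Require Import structures.
From mathcomp Require Import all_boot all_order all_algebra.
From mathcomp Require Import all_classical all_reals.
From mathcomp Require Import topology normedtype sequences esum trigo.
From mathcomp Require Import complex.
From mathcomp Require Import ereal derive realfun.
From mathcomp Require Import ring lra zify.
Set Implicit Arguments. Unset Strict Implicit. Unset Printing Implicit Defensive.
Import Order.TTheory GRing.Theory Num.Theory.
Import numFieldNormedType.Exports.
Local Open Scope classical_set_scope.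
Local Open Scope ring_scope.
Import Normc.
Local Open Scope complex_scope.

Section AbsSummable.
Variable R : realType.
Implicit Types (g h a b : nat * nat -> R) (c : R).

Definition abs_summable g := summable [set: nat * nat] (fun p => (g p)%:E).

Lemma ge0_esumZl c (e : nat * nat -> \bar R) : 0 <= c -> (forall p, 0 <= e p)%E ->
  (\esum_(p in [set: nat * nat]) (c%:E * e p) = c%:E * \esum_(p in [set: nat * nat]) e p)%E.
Proof.
move=> c0 e0; rewrite /esum -ereal_supZl //; last first.
  by apply/set0P; exists 0%E, set0; [exact: fsets_set0 | rewrite fsbig_set0].
congr ereal_sup; rewrite image_comp; apply: eq_imagel => A _ /=.
by rewrite ge0_mule_fsumr.
Qed.

Lemma abs_summableE g :
  abs_summable g = (\esum_(p in [set: nat * nat]) (`|g p|)%:E < +oo)%E.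
Proof. by []. Qed.

Lemma abs_summable_le g h :
  (forall p, `|g p| <= `|h p|) -> abs_summable h -> abs_summable g.
Proof. by move=> gh; apply: le_lt_trans; apply: le_esum => p _; rewrite lee_fin. Qed.

Lemma abs_summable_le_ge0 g h :
  (forall p, 0 <= g p <= h p) -> abs_summable h -> abs_summable g.
Proof.
move=> gh; apply: abs_summable_le => p; have /andP[g0 gh'] := gh p.
by rewrite ger0_norm // (le_trans gh') ?ler_norm.
Qed.

Lemma abs_summableD g h : abs_summable g -> abs_summable h -> abs_summable (g \+ h).
Proof. exact: summableD. Qed.

Lemma abs_summableN g : abs_summable g -> abs_summable (fun p => - g p).
Proof. by rewrite /abs_summable summableN. Qed.

Lemma abs_summableZ c g : abs_summable g -> abs_summable (fun p => c * g p).
Proof.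
rewrite !abs_summableE => sg.
under eq_esum do rewrite normrM EFinM.
by rewrite ge0_esumZl // ?lte_mul_pinfty // => p; rewrite lee_fin.
Qed.

Lemma abs_summable_big (I : Type) (r : seq I) (P : pred I) (F : I -> nat * nat -> R) :
  (forall i, P i -> abs_summable (F i)) ->
  abs_summable (fun p => \sum_(i <- r | P i) F i p).
Proof.
move=> sF; elim: r => [|i r IH].
  by rewrite abs_summableE esum1 // => p _; rewrite big_nil normr0.
under [X in abs_summable X]funext do rewrite big_cons.
by case: (boolP (P i)) => // Pi; exact: abs_summableD (sF _ Pi) IH.
Qed.

Lemma ge0_sumRE a : (forall p, 0 <= a p) ->
  sumR a = fine (\esum_(p in [set: nat * nat]) (a p)%:E)%E.
Proof.
move=> a0; rewrite /sumR [X in _ - fine X]esum1 ?subr0 => [|p _]; last first.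
  by rewrite max_r // oppr_le0.
by under eq_esum do rewrite max_l //.
Qed.

Lemma ge0_esum_fin_num a : (forall p, 0 <= a p) -> abs_summable a ->
  (\esum_(p in [set: nat * nat]) (a p)%:E)%E \is a fin_num.
Proof.
move=> a0 sa; rewrite ge0_fin_numE ?esum_ge0 // => [|p _]; last by rewrite lee_fin.
by apply: le_lt_trans sa; apply: le_esum => p _; rewrite lee_fin ler_norm.
Qed.

Lemma sumR_ge0 a : (forall p, 0 <= a p) -> 0 <= sumR a.
Proof. by move=> a0; rewrite ge0_sumRE // fine_ge0 // esum_ge0 // => p _; rewrite lee_fin. Qed.

Lemma ge0_sumRD a b : (forall p, 0 <= a p) -> (forall p, 0 <= b p) ->
  abs_summable a -> abs_summable b -> sumR (a \+ b) = sumR a + sumR b.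
Proof.
move=> a0 b0 sa sb; rewrite !ge0_sumRE // => [|p]; last exact: addr_ge0.
under eq_esum do rewrite EFinD.
rewrite esumD => [||p _]; last by rewrite lee_fin.
  by rewrite fineD // ge0_esum_fin_num.
by move=> p _; rewrite lee_fin.
Qed.

Lemma ge0_sumRZ c a : 0 <= c -> (forall p, 0 <= a p) -> abs_summable a ->
  sumR (fun p => c * a p) = c * sumR a.
Proof.
move=> c0 a0 sa; rewrite !ge0_sumRE // => [|p]; last exact: mulr_ge0.
under eq_esum do rewrite EFinM.
by rewrite ge0_esumZl ?fineM // ?ge0_esum_fin_num // => p; rewrite lee_fin.
Qed.

Let pos g p := Num.max (g p) 0.
Let neg g p := Num.max (- g p) 0.

Let pos_ge0 g p : 0 <= pos g p. Proof. by rewrite le_max lexx orbT. Qed.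
Let neg_ge0 g p : 0 <= neg g p. Proof. by rewrite le_max lexx orbT. Qed.

Let sumR_posneg g : sumR g = sumR (pos g) - sumR (neg g).
Proof. by rewrite (ge0_sumRE (pos_ge0 g)) (ge0_sumRE (neg_ge0 g)). Qed.

Let abs_summable_pos g : abs_summable g -> abs_summable (pos g).
Proof.
by apply: abs_summable_le => p; rewrite ger0_norm // /pos ge_max ler_norm normr_ge0.
Qed.

Let abs_summable_neg g : abs_summable g -> abs_summable (neg g).
Proof.
by move=> /abs_summableN; apply: abs_summable_le => p;
  rewrite ger0_norm // /neg ge_max ler_norm normr_ge0.
Qed.

Let pos_sub_neg g p : pos g p - neg g p = g p.
Proof. by rewrite /pos /neg; case: (lerP 0 (g p)) => hg; case: (lerP 0 (- g p)) => hg'; lra. Qed.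

Lemma sumR_split g a b : (forall p, 0 <= a p) -> (forall p, 0 <= b p) ->
  abs_summable a -> abs_summable b -> (forall p, g p = a p - b p) ->
  sumR g = sumR a - sumR b.
Proof.
move=> a0 b0 sa sb gE.
have sg : abs_summable g by rewrite (funext gE); exact: abs_summableD sa (abs_summableN sb).
have eq_sums : a \+ neg g = b \+ pos g.
  by apply/funext => p /=; have := pos_sub_neg g p; rewrite gE; lra.
have := congr1 (@sumR R) eq_sums.
rewrite !ge0_sumRD ?abs_summable_pos ?abs_summable_neg ?abs_summableN //.
by rewrite (sumR_posneg g); lra.
Qed.

Lemma sumRD g h : abs_summable g -> abs_summable h -> sumR (g \+ h) = sumR g + sumR h.
Proof.
move=> sg sh; rewrite (sumR_split (a := pos g \+ pos h) (b := neg g \+ neg h)).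
- rewrite !ge0_sumRD ?abs_summable_pos ?abs_summable_neg ?abs_summableN //.
  by rewrite (sumR_posneg g) (sumR_posneg h); lra.
- by move=> p; exact: addr_ge0.
- by move=> p; exact: addr_ge0.
- by apply: abs_summableD; exact: abs_summable_pos.
- by apply: abs_summableD; exact: abs_summable_neg.
- by move=> p /=; rewrite -(pos_sub_neg g p) -(pos_sub_neg h p); lra.
Qed.

Lemma sumRN g : sumR (fun p => - g p) = - sumR g.
Proof. by rewrite /sumR; under [X in _ - fine X]eq_esum do rewrite opprK; rewrite opprB. Qed.

Lemma sumRZ c g : abs_summable g -> sumR (fun p => c * g p) = c * sumR g.
Proof.
move=> sg; wlog c0 : c / 0 <= c => [hwlog|].
  have [|c_lt0] := lerP 0 c; first exact: hwlog.
  have -> : (fun p => c * g p) = (fun p => - (- c * g p)).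
    by apply/funext => p; rewrite mulNr opprK.
  by rewrite sumRN hwlog ?oppr_ge0 ?ltW // mulNr opprK.
rewrite (sumR_posneg g) (sumR_split (a := fun p => c * pos g p) (b := fun p => c * neg g p)).
- by rewrite !ge0_sumRZ ?abs_summable_pos ?abs_summable_neg ?abs_summableN // -mulrBr.
- by move=> p; exact: mulr_ge0.
- by move=> p; exact: mulr_ge0.
- exact/abs_summableZ/abs_summable_pos.
- exact/abs_summableZ/abs_summable_neg.
- by move=> p; rewrite -mulrBr pos_sub_neg.
Qed.

Lemma sumRB g h : abs_summable g -> abs_summable h ->
  sumR (fun p => g p - h p) = sumR g - sumR h.
Proof. by move=> sg sh; rewrite (sumRD sg (abs_summableN sh)) sumRN. Qed.

Lemma ler_sumR g h : abs_summable g -> abs_summable h -> (forall p, g p <= h p) ->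
  sumR g <= sumR h.
Proof.
by move=> sg sh gh; rewrite -subr_ge0 -sumRB // sumR_ge0 // => p; rewrite subr_ge0.
Qed.

Lemma sumR_big (I : Type) (r : seq I) (P : pred I) (F : I -> nat * nat -> R) :
  (forall i, P i -> abs_summable (F i)) ->
  sumR (fun p => \sum_(i <- r | P i) F i p) = \sum_(i <- r | P i) sumR (F i).
Proof.
move=> sF; elim: r => [|i r IH].
  by rewrite big_nil ge0_sumRE ?esum1 // => p; rewrite big_nil.
under [X in sumR X]funext do rewrite big_cons.
rewrite big_cons; case: (boolP (P i)) => // Pi.
by rewrite (sumRD (sF _ Pi) (abs_summable_big _ sF)) IH.
Qed.
End AbsSummable.

Section ComplexSums.
Variable R : realType.
Implicit Types (z w : R[i]) (h k : nat * nat -> R[i]).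

Lemma norm_normc z : `|z| = (normc z)%:C.
Proof. by rewrite normc_def; case: z. Qed.

Lemma normc_ge0 z : 0 <= normc z.
Proof. by case: z => a b; exact: sqrtr_ge0. Qed.

Lemma sqmod_normc z : sqmod z = normc z ^+ 2.
Proof. by case: z => a b; rewrite /sqmod /= sqr_sqrtr // addr_ge0 // sqr_ge0. Qed.

Lemma normc_conj z : normc z^* = normc z.
Proof. by case: z => a b; rewrite /= sqrrN. Qed.

Lemma normc_real (r : R) : normc r%:C = `|r|.
Proof. by rewrite /= expr0n /= addr0 sqrtr_sqr. Qed.

Lemma ler_normc_Re z : `|complex.Re z| <= normc z.
Proof. by rewrite -lecR -norm_normc normc_ge_Re. Qed.

Lemma ler_normc_Im z : `|complex.Im z| <= normc z.
Proof.
case: z => a b; rewrite /= -sqrtr_sqr ler_sqrt ?lerDr ?sqr_ge0 //.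
by rewrite addr_ge0 // sqr_ge0.
Qed.

Lemma ler_normc_sum (I : Type) (r : seq I) (P : pred I) (F : I -> R[i]) :
  normc (\sum_(i <- r | P i) F i) <= \sum_(i <- r | P i) normc (F i).
Proof.
elim: r => [|i r IH]; first by rewrite !big_nil normc0.
by rewrite !big_cons; case: (P i) => //; exact: le_trans (le_normcD _ _) (lerD (lexx _) IH).
Qed.

Definition csum h : R[i] := sumR (fun p => complex.Re (h p)) +i* sumR (fun p => complex.Im (h p)).

Definition cabs_summable h := abs_summable (fun p => normc (h p)).

Lemma abs_summable_Re h : cabs_summable h -> abs_summable (fun p => complex.Re (h p)).
Proof. by apply: abs_summable_le => p; rewrite (ger0_norm (normc_ge0 _)) ler_normc_Re. Qed.

Lemma abs_summable_Im h : cabs_summable h -> abs_summable (fun p => complex.Im (h p)).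
Proof. by apply: abs_summable_le => p; rewrite (ger0_norm (normc_ge0 _)) ler_normc_Im. Qed.

Lemma cabs_summableD h k : cabs_summable h -> cabs_summable k -> cabs_summable (h \+ k).
Proof.
move=> sh sk; apply: abs_summable_le_ge0 (abs_summableD sh sk) => p.
by rewrite normc_ge0 le_normcD.
Qed.

Lemma cabs_summableZ w h : cabs_summable h -> cabs_summable (fun p => w * h p).
Proof.
move=> sh; apply: abs_summable_le (abs_summableZ (normc w) sh) => p.
by rewrite normcM.
Qed.

Lemma cabs_summableN h : cabs_summable h -> cabs_summable (fun p => - h p).
Proof. by apply: abs_summable_le => p; rewrite normcN. Qed.

Lemma cabs_summable_big (I : Type) (r : seq I) (P : pred I) (F : I -> nat * nat -> R[i]) :
  (forall i, P i -> cabs_summable (F i)) ->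
  cabs_summable (fun p => \sum_(i <- r | P i) F i p).
Proof.
move=> sF; apply: abs_summable_le_ge0 (abs_summable_big r sF) => p.
by rewrite normc_ge0 ler_normc_sum.
Qed.

Lemma csumD h k : cabs_summable h -> cabs_summable k -> csum (h \+ k) = csum h + csum k.
Proof.
move=> sh sk; rewrite /csum /=; congr (_ +i* _).
  rewrite -sumRD ?abs_summable_Re //; congr sumR; apply/funext => p /=; exact: raddfD.
rewrite -sumRD ?abs_summable_Im //; congr sumR; apply/funext => p /=; exact: raddfD.
Qed.

Lemma csumZ w h : cabs_summable h -> csum (fun p => w * h p) = w * csum h.
Proof.
case: w => a b sh; have sRe := abs_summable_Re sh; have sIm := abs_summable_Im sh.
rewrite /csum /=; congr (_ +i* _).
  have -> : (fun p => complex.Re ((a +i* b) * h p))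
      = (fun p => a * complex.Re (h p) - b * complex.Im (h p)).
    by apply/funext => p; case: (h p).
  by rewrite sumRB ?sumRZ //; exact: abs_summableZ.
have -> : (fun p => complex.Im ((a +i* b) * h p))
    = (fun p => a * complex.Im (h p) + b * complex.Re (h p)).
  by apply/funext => p; case: (h p).
by rewrite sumRD ?sumRZ //; exact: abs_summableZ.
Qed.

Lemma csumB h k : cabs_summable h -> cabs_summable k ->
  csum (fun p => h p - k p) = csum h - csum k.
Proof.
move=> sh sk; have -> : (fun p => h p - k p) = h \+ (fun p => -1 * k p).
  by apply/funext => p /=; rewrite mulN1r.
by rewrite csumD ?csumZ ?mulN1r //; exact: cabs_summableZ.
Qed.

Lemma csum_big (I : Type) (r : seq I) (P : pred I) (F : I -> nat * nat -> R[i]) :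
  (forall i, P i -> cabs_summable (F i)) ->
  csum (fun p => \sum_(i <- r | P i) F i p) = \sum_(i <- r | P i) csum (F i).
Proof.
move=> sF; elim: r => [|i r IH].
  by rewrite big_nil /csum !ge0_sumRE ?esum1 //= => p; rewrite big_nil.
under [X in csum X]funext do rewrite big_cons.
rewrite big_cons; case: (boolP (P i)) => // Pi.
by rewrite (csumD (sF _ Pi) (cabs_summable_big _ sF)) IH.
Qed.

Lemma normc_csum_le h : cabs_summable h -> normc (csum h) <= sumR (fun p => normc (h p)).
Proof.
move=> sh; set c := csum h; set M := sumR _.
have M0 : 0 <= M by apply: sumR_ge0 => p; exact: normc_ge0.
have c0 := normc_ge0 c.
have : normc c ^+ 2 <= normc c * M.
  have -> : normc c ^+ 2 = complex.Re (c^* * csum h).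
    by rewrite -sqmod_normc /c; case: (csum h) => a b; rewrite /sqmod /=; ring.
  rewrite -csumZ // -sumRZ; last exact: sh.
  apply: ler_sumR => [||p]; first exact/abs_summable_Re/cabs_summableZ.
    exact: abs_summableZ.
  by rewrite -(normc_conj c) -normcM (le_trans (ler_norm _)) ?ler_normc_Re.
nra.
Qed.
End ComplexSums.

Section HilbertSpace.
Variable R : realType.
Implicit Types (v w : state R) (a z : R[i]) (U : state R -> state R).

Lemma sqmod_ge0 z : 0 <= sqmod z.
Proof. by rewrite sqmod_normc sqr_ge0. Qed.

Lemma sqmodN z : sqmod (- z) = sqmod z.
Proof. by rewrite !sqmod_normc normcN. Qed.

Lemma l2E v : l2 v <-> abs_summable (fun p => sqmod (v p)).
Proof.
by rewrite abs_summableE (eq_esum (fun p _ => congr1 EFin (ger0_norm (sqmod_ge0 (v p))))).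
Qed.

Lemma sumR_sqmod v : sumR (fun p => sqmod (v p)) = fine (normsq v).
Proof. by rewrite ge0_sumRE // => p; exact: sqmod_ge0. Qed.

Lemma normc_conjM_le a z : normc (a^* * z) <= sqmod a + sqmod z.
Proof.
rewrite normcM normc_conj !sqmod_normc.
by have := sqr_ge0 (normc a - normc z); nra.
Qed.

Lemma cabs_summable_inner v w : l2 v -> l2 w -> cabs_summable (fun p => (v p)^* * w p).
Proof.
move=> /l2E sv /l2E sw; apply: abs_summable_le_ge0 (abs_summableD sv sw) => p.
by rewrite normc_ge0 normc_conjM_le.
Qed.

Lemma sqmod_unit_scale_add a z z' : sqmod a = 1 ->
  sqmod (a * z + z') = sqmod z + sqmod z' + 2 * complex.Re (a^* * (z^* * z')).
Proof.
move=> a1; have -> : sqmod z = sqmod a * sqmod z by rewrite a1 mul1r.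
by case: a {a1} => a1 a2; case: z => z1 z2; case: z' => w1 w2; rewrite /sqmod /=; ring.
Qed.

Lemma normc_unit a : sqmod a = 1 -> normc a = 1.
Proof. by rewrite sqmod_normc => /eqP; rewrite sqrp_eq1 ?normc_ge0 // => /eqP. Qed.

Lemma ler_Re_unit a z : sqmod a = 1 -> complex.Re (a^* * z) <= normc z.
Proof.
move=> a1; rewrite (le_trans (ler_norm _)) // (le_trans (ler_normc_Re _)) //.
by rewrite normcM normc_conj normc_unit // mul1r.
Qed.

Lemma l2_unit_scale_add a v w : sqmod a = 1 -> l2 v -> l2 w -> l2 (fun p => a * v p + w p).
Proof.
move=> a1 lv lw; have svw := cabs_summable_inner lv lw.
move/l2E: lv => sv; move/l2E: lw => sw; apply/l2E.
apply: abs_summable_le_ge0 (abs_summableD (abs_summableD sv sw) (abs_summableZ 2 svw)) => p.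
by rewrite sqmod_ge0 sqmod_unit_scale_add //= lerD2l ler_wpM2l // ler_Re_unit.
Qed.

Lemma polarization a v w : sqmod a = 1 -> l2 v -> l2 w ->
  2 * complex.Re (a^* * inner v w)
  = fine (normsq (fun p => a * v p + w p)) - fine (normsq v) - fine (normsq w).
Proof.
move=> a1 lv lw; have svw := cabs_summable_inner lv lw.
have sRe := abs_summable_Re (cabs_summableZ a^* svw).
move/l2E: (lv) => sv; move/l2E: (lw) => sw.
have -> : inner v w = csum (fun p => (v p)^* * w p) by [].
rewrite -csumZ // -!sumR_sqmod.
under [X in sumR X]eq_fun do rewrite sqmod_unit_scale_add //.
by rewrite (sumRD (abs_summableD sv sw) (abs_summableZ 2 sRe)) sumRD // sumRZ //=; lra.
Qed.

Lemma Re_conj1 z : complex.Re (1^* * z) = complex.Re z.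
Proof. by case: z => a b /=; ring. Qed.

Lemma Re_conji z : complex.Re ('i^* * z) = complex.Im z.
Proof. by case: z => a b /=; ring. Qed.

Lemma unitary_inner U v w : unitary U -> l2 v -> l2 w -> inner (U v) (U w) = inner v w.
Proof.
case=> UL2 Ulin Unorm _ lv lw.
have ReE a : sqmod a = 1 -> complex.Re (a^* * inner (U v) (U w)) = complex.Re (a^* * inner v w).
  move=> a1; have lavw := l2_unit_scale_add a1 lv lw.
  have := polarization a1 (UL2 _ lv) (UL2 _ lw); have := polarization a1 lv lw.
  by rewrite -Ulin // !Unorm //; lra.
apply/eqP; rewrite eq_complex; apply/andP; split; apply/eqP.
  by rewrite -(Re_conj1 (inner v w)) -Re_conj1; apply: ReE; rewrite /sqmod /= expr1n expr0n addr0.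
by rewrite -(Re_conji (inner v w)) -Re_conji; apply: ReE; rewrite /sqmod /= expr1n expr0n add0r.
Qed.

Lemma normsq_oracle N (x : {ffun 'I_N -> bool}) v : normsq (oracle x v) = normsq v.
Proof. by apply: eq_esum => p _; rewrite /oracle; case: (bit x p.2); rewrite ?sqmodN. Qed.

Lemma l2_oracle N (x : {ffun 'I_N -> bool}) v : l2 v -> l2 (oracle x v).
Proof. by rewrite /l2 normsq_oracle. Qed.

Lemma cabs_summable_oracle_gap N (x y : {ffun 'I_N -> bool}) v w : l2 v -> l2 w ->
  cabs_summable (fun p => (v p)^* * w p - (oracle x v p)^* * oracle y w p).
Proof.
move=> lv lw; apply: cabs_summableD (cabs_summable_inner lv lw) (cabs_summableN _).
exact: cabs_summable_inner (l2_oracle _ lv) (l2_oracle _ lw).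
Qed.

Lemma normsq_ket0 : normsq (ket0 R) = 1%E.
Proof.
rewrite /normsq (eq_esum (fun p _ => _ : _ = (if p \in [set (0, 0)%N] then 1 else 0)%E)).
  by rewrite -esum_mkcond esum_set1.
move=> p _; rewrite /ket0; case: eqVneq => [->|np].
  by rewrite mem_set // sqmod_normc normc1 expr1n.
by rewrite memNset ?sqmod_normc ?normc0 ?expr0n // => /= /eqP; rewrite (negbTE np).
Qed.

Lemma normsq_psi U N (x : {ffun 'I_N -> bool}) j : unitary U -> normsq (psi U x j) = 1%E.
Proof.
case=> UL2 _ Unorm _; have ket0_l2 : l2 (ket0 R) by rewrite /l2 normsq_ket0 ltry.
elim: j => [|j IH]; first by rewrite /= Unorm // normsq_ket0.
have psi_l2 : l2 (psi U x j) by rewrite /l2 IH ltry.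
by rewrite /= Unorm ?normsq_oracle //; exact: l2_oracle.
Qed.

Lemma l2_psi U N (x : {ffun 'I_N -> bool}) j : unitary U -> l2 (psi U x j).
Proof. by move=> hU; rewrite /l2 normsq_psi // ltry. Qed.
End HilbertSpace.

Section MonotoneStrings.
Variable N : nat.
Hypothesis N_gt0 : (0 < N)%N.
Implicit Types x y : {ffun 'I_N -> bool}.

Let last_ord : 'I_N := Ordinal (etrans (ltn_predL N) N_gt0).

Lemma inS_has x : inS x -> has (fun i : 'I_N => x i) (enum 'I_N).
Proof.
case/andP=> _ /forallP/(_ last_ord)/implyP/(_ (eqxx _)) x_last.
by apply/hasP; exists last_ord; rewrite ?mem_enum.
Qed.

Lemma f_lt x : inS x -> (f x < N)%N.
Proof. by move=> Sx; rewrite /f -[X in (_ < X)%N](size_enum_ord N) -has_find inS_has. Qed.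

Lemma inS_eq x : inS x -> forall k : 'I_N, x k = (f x <= k)%N.
Proof.
move=> Sx k; set i0 := nth k (enum 'I_N) (f x).
have i0E : i0 = f x :> nat by rewrite /i0 nth_enum_ord ?f_lt.
have x_i0 : x i0 := nth_find k (inS_has Sx).
case: leqP => [fk | kf].
  case/andP: Sx => /forallP/(_ i0)/forallP/(_ k)/implyP x_mono _.
  by apply: (implyP (x_mono _)); rewrite ?i0E.
by have := before_find k kf; rewrite nth_ord_enum.
Qed.

Lemma f_inj : {in [pred x | inS x] &, injective (@f N)}.
Proof. by move=> x y Sx Sy fxy; apply/ffunP => k; rewrite !inS_eq // fxy. Qed.

Lemma bit_inS x i : inS x -> bit x i = (f x <= i < N)%N.
Proof.
move=> Sx; rewrite /bit; case: insubP => [k _ <-|/negbTE -> /=]; last by rewrite andbF.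
by rewrite inS_eq // ltn_ord andbT.
Qed.

Lemma card_inS : (#|[pred x : {ffun 'I_N -> bool} | inS x]| <= N)%N.
Proof.
have := @uniq_leq_size _ [seq f x | x <- enum [pred x | @inS N x]] (iota 0 N).
rewrite size_map size_iota -cardE; apply.
  by rewrite map_inj_in_uniq ?enum_uniq // => x y; rewrite !mem_enum; exact: f_inj.
by move=> n /mapP[x]; rewrite mem_enum mem_iota add0n => Sx ->; exact: f_lt.
Qed.
End MonotoneStrings.

Section MidpointRule.
Variable R : realType.

Lemma is_derive_symdiff (F : R -> R) (m t dFp dFm : R) :
  is_derive (m + t) 1 F dFp -> is_derive (m - t) 1 F dFm ->
  is_derive t 1 (fun s => F (m + s) - F (m - s)) (dFp + dFm).
Proof.
move=> F_der_plus F_der_minus.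
have plus_der : is_derive t 1 (fun s => m + s) 1.
  by have := is_deriveD (is_derive_cst m t 1) (is_derive_id t 1); rewrite add0r.
have minus_der : is_derive t 1 (fun s => m - s) (-1).
  by have := is_deriveB (is_derive_cst m t 1) (is_derive_id t 1); rewrite sub0r.
have := is_deriveB (@is_derive1_comp _ F (fun s => m + s) t _ _ F_der_plus plus_der)
  (@is_derive1_comp _ F (fun s => m - s) t _ _ F_der_minus minus_der).
by rewrite mulr1 mulrN1 opprK.
Qed.

Lemma continuous_symdiff (F : R -> R) (m : R) : continuous F ->
  continuous (fun s => F (m + s) - F (m - s)).
Proof.
move=> F_cont t; apply: continuousB.
  apply: (@continuous_comp _ _ _ (fun s => m + s) F); last exact: F_cont.
  by apply: continuousD; [exact: cst_continuous | exact: cvg_id].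
apply: (@continuous_comp _ _ _ (fun s => m - s) F); last exact: F_cont.
by apply: continuousB; [exact: cst_continuous | exact: cvg_id].
Qed.

Lemma midpoint_le_increment (F dF : R -> R) (m d : R) : 0 <= d -> continuous F ->
  (forall t, m - d < t < m + d -> is_derive t 1 F (dF t)) ->
  (forall t, 0 < t < d -> 2 * dF m <= dF (m + t) + dF (m - t)) ->
  2 * d * dF m <= F (m + d) - F (m - d).
Proof.
move=> d0 F_cont F_der dF_convex.
pose H t := F (m + t) - F (m - t) - 2 * dF m * t.
have H_der t : 0 < t < d -> is_derive t 1 H (dF (m + t) + dF (m - t) - 2 * dF m).
  move=> t_in; have lin_der : is_derive t 1 (fun s => 2 * dF m * s) (2 * dF m).
    by have := is_deriveZ (2 * dF m) (is_derive_id t 1); rewrite /GRing.scale /= mulr1.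
  by apply: is_deriveB lin_der; apply: is_derive_symdiff; apply: F_der; lra.
have H_cont : continuous (fun t => F (m + t) - F (m - t) - 2 * dF m * t).
  move=> t; have lin_cont : {for t, continuous (fun s : R => 2 * dF m * s)}.
    by apply: continuousM; [exact: cst_continuous | exact: cvg_id].
  apply: continuousB lin_cont; exact: continuous_symdiff.
have : H 0 <= H d.
  apply: (@ger0_derive1_le_cc R H 0 d) => //; first 3 last.
  - by rewrite in_itv /= lexx.
  - by rewrite in_itv /= lexx d0.
  - by move=> t; rewrite in_itv /= => /H_der [].
  - move=> t; rewrite in_itv /= => t_in; rewrite derive1E.
    by case: (H_der t t_in) => _ ->; rewrite subr_ge0 dF_convex.
  - by apply: continuous_subspaceT => t; exact: H_cont.
by rewrite /H !(addr0, subr0, mulr0) subrr; lra.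
Qed.
End MidpointRule.

Section HilbertRowSum.
Variable R : realType.

(* [phi] is a primitive of [dphi] on s > 0 and increases by [pi] in total. *)
Definition phi (s : R) : R := 2 * atan (Num.sqrt s).
Definition dphi (s : R) : R := ((1 + s) * Num.sqrt s)^-1.

Lemma is_derive_phi (s : R) : 0 < s -> is_derive s 1 phi (dphi s).
Proof.
move=> s0.
have atan_sqrt_der := is_derive1_comp (is_derive1_atan (Num.sqrt s)) (is_derive1_sqrt s0).
have := is_deriveZ 2 atan_sqrt_der.
rewrite sqr_sqrtr ?ltW // /GRing.scale /= => h; apply: is_derive_eq h _.
by rewrite /dphi; field; rewrite ?gt_eqF ?sqrtr_gt0 //; lra.
Qed.

Lemma continuous_phi : continuous phi.
Proof.
move=> s; have atan_sqrt_cont : {for s, continuous (fun x : R => atan (Num.sqrt x))}.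
  apply: (@continuous_comp _ _ _ (@Num.sqrt R) (@atan R)); first exact: sqrt_continuous.
  exact: continuous_atan.
have : {for s, continuous (fun x : R => 2 * atan (Num.sqrt x))}.
  by apply: continuousM => //; exact: cst_continuous.
by [].
Qed.

Lemma inv_midpoint_le (y z : R) : 0 < y -> 0 < z -> 4 / (y + z) <= y^-1 + z^-1.
Proof.
move=> y0 z0; rewrite -subr_ge0.
have -> : y^-1 + z^-1 - 4 / (y + z) = (y - z) ^+ 2 / (y * z * (y + z)).
  by field; rewrite !gt_eqF ?addr_gt0.
by rewrite divr_ge0 ?sqr_ge0 // !mulr_ge0 ?addr_ge0 // ltW.
Qed.

Lemma sqrt_midpoint_le (m d : R) : 0 <= d <= m ->
  Num.sqrt (m + d) + Num.sqrt (m - d) <= 2 * Num.sqrt m.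
Proof.
case/andP=> d0 dm; set A := Num.sqrt (m + d); set B := Num.sqrt (m - d).
have A0 : 0 <= A := sqrtr_ge0 _; have B0 : 0 <= B := sqrtr_ge0 _.
have r0 := sqrtr_ge0 m.
have A2 : A ^+ 2 = m + d by rewrite sqr_sqrtr //; lra.
have B2 : B ^+ 2 = m - d by rewrite sqr_sqrtr //; lra.
have r2 : Num.sqrt m ^+ 2 = m by rewrite sqr_sqrtr //; lra.
have := sqr_ge0 (A - B); nra.
Qed.

Lemma midpoint_convexM (a b c a' b' c' : R) : 0 <= b -> 0 <= b' ->
  2 * b <= a + c -> 2 * b' <= a' + c' -> 0 <= (a - c) * (a' - c') ->
  2 * (b * b') <= a * a' + c * c'.
Proof. by move=> b0 b'0 h h' sim; nra. Qed.

Lemma dphi_midpoint_convex (m d : R) : 0 <= d < m -> 2 * dphi m <= dphi (m + d) + dphi (m - d).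
Proof.
case/andP=> d0 dm; have m0 : 0 < m by lra.
have A0 : 0 < Num.sqrt (m + d) by rewrite sqrtr_gt0; lra.
have B0 : 0 < Num.sqrt (m - d) by rewrite sqrtr_gt0; lra.
have r0 : 0 < Num.sqrt m by rewrite sqrtr_gt0.
rewrite /dphi !invfM; apply: midpoint_convexM.
- by rewrite invr_ge0; lra.
- by rewrite invr_ge0 ltW.
- have := @inv_midpoint_le (1 + (m + d)) (1 + (m - d)) ltac:(lra) ltac:(lra).
  by congr (_ <= _); field; lra.
- apply: le_trans (inv_midpoint_le A0 B0).
  have -> : 2 * (Num.sqrt m)^-1 = 4 / (2 * Num.sqrt m) by field; rewrite gt_eqF.
  by rewrite ler_wpM2l // lef_pV2 ?posrE ?addr_gt0 ?mulr_gt0 // sqrt_midpoint_le // d0 ltW.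
- apply: mulr_le0; rewrite subr_le0 lef_pV2 ?posrE //; try lra.
  by rewrite ler_sqrt; lra.
Qed.

(* Schur-test weight for the kernel 1 / (a + b); [schur_weight c t = dphi (t / c) / c]. *)
Definition schur_weight (a b : R) : R := ((a + b) * Num.sqrt (b / a))^-1.

Lemma schur_weight_ge0 a b : 0 <= a -> 0 <= b -> 0 <= schur_weight a b.
Proof. by move=> a0 b0; rewrite invr_ge0 mulr_ge0 ?addr_ge0 ?sqrtr_ge0. Qed.

Lemma schur_weight_le_phi (c : R) (n : nat) : 0 < c ->
  schur_weight c (n%:R + 2^-1) <= phi (n.+1%:R / c) - phi (n%:R / c).
Proof.
move=> c0; set a := n%:R + 2^-1.
have a0 : 0 < a by rewrite /a; have := ler0n R n; lra.
set m := a / c; set d := (2 * c)^-1.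
have m0 : 0 < m by rewrite divr_gt0.
have md : m - d = n%:R / c by rewrite /m /d /a; field; rewrite gt_eqF.
have n_ge0 : 0 <= n%:R / c by rewrite divr_ge0 // ltW.
have mdE : m + d = n.+1%:R / c by rewrite /m /d /a -natr1; field; rewrite gt_eqF.
have -> : schur_weight c a = 2 * d * dphi m.
  rewrite /schur_weight /dphi /m /d; field.
  by rewrite !gt_eqF ?(addr_gt0 c0 a0) ?sqrtr_gt0 ?divr_gt0.
rewrite -mdE -md; apply: midpoint_le_increment.
- by rewrite invr_ge0 mulr_ge0 // ltW.
- exact: continuous_phi.
- by move=> t; rewrite md => /andP[t0 _]; apply: is_derive_phi; lra.
- by move=> t /andP[t0 td]; apply: dphi_midpoint_convex; rewrite ltW //=; lra.
Qed.

Lemma sum_schur_weight_le_pi (c : R) (K : nat) : 0 < c ->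
  \sum_(n < K) schur_weight c (n%:R + 2^-1) <= pi.
Proof.
move=> c0; apply: (le_trans (ler_sum _ (fun (n : 'I_K) _ => schur_weight_le_phi n c0))).
rewrite -(big_mkord xpredT (fun n => phi (n.+1%:R / c) - phi (n%:R / c))).
rewrite telescope_sumr // mul0r /phi sqrtr0 atan0 mulr0 subr0.
by have := atan_ltpi2 (Num.sqrt (K%:R / c)); lra.
Qed.
End HilbertRowSum.

Section HilbertInequality.
Variable R : realType.

Lemma sum_inj_le (T : finType) (P : pred T) (k : T -> nat) (F : nat -> R) :
  {in P &, injective k} -> (forall n, 0 <= F n) ->
  \sum_(x | P x) F (k x) <= \sum_(n < (\max_(x | P x) k x).+1) F n.
Proof.
move=> k_inj F0; set K := \max_(x | P x) k x.
have kK x : P x -> (k x < K.+1)%N by move=> Px; rewrite ltnS leq_bigmax_cond.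
have -> : \sum_(x | P x) F (k x) = \sum_(x in P) F (@inord K (k x)).
  by apply: eq_bigr => x Px; rewrite inordK ?kK.
rewrite -(big_imset (fun n : 'I_K.+1 => F n)) /=; last first.
  by move=> x y Px Py /(congr1 (@nat_of_ord _)); rewrite !inordK ?kK //; exact: k_inj.
rewrite [X in _ <= X](bigID (mem ((fun x => @inord K (k x)) @: P))) /= lerDl.
by apply: sumr_ge0.
Qed.

Lemma sum_schur_weight_inj_le (T : finType) (P : pred T) (k : T -> nat) (c : R) :
  0 < c -> {in P &, injective k} ->
  \sum_(x | P x) schur_weight c ((k x)%:R + 2^-1) <= pi.
Proof.
move=> c0 k_inj; pose F n := schur_weight c (n%:R + 2^-1).
apply: le_trans (sum_inj_le (F := F) k_inj _) (sum_schur_weight_le_pi _ c0).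
by move=> n; rewrite schur_weight_ge0 ?ltW // addr_ge0.
Qed.

Lemma schur_amgm (a b u v : R) : 0 < a -> 0 < b ->
  2 * u * v / (a + b) <= u ^+ 2 * schur_weight a b + v ^+ 2 * schur_weight b a.
Proof.
move=> a0 b0; have s0 : 0 < Num.sqrt (b / a) by rewrite sqrtr_gt0 divr_gt0.
rewrite /schur_weight -[a / b]invf_div (sqrtrV (ltW (divr_gt0 b0 a0))).
move: s0; set s := Num.sqrt (b / a) => s0.
rewrite -subr_ge0.
have -> : u ^+ 2 * ((a + b) * s)^-1 + v ^+ 2 * ((b + a) * s^-1)^-1 - 2 * u * v / (a + b)
   = (u - s * v) ^+ 2 / ((a + b) * s).
  by field; rewrite !gt_eqF // addr_gt0.
by rewrite divr_ge0 ?sqr_ge0 // mulr_ge0 // ltW // addr_gt0.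
Qed.

Lemma sum_rows_schur_le (T : finType) (P Q : pred T) (a : T -> R) (k : T -> nat) (u : T -> R) :
  (forall x, P x -> 0 < a x) -> {in Q &, injective k} ->
  \sum_(x | P x) \sum_(y | Q y) u x ^+ 2 * schur_weight (a x) ((k y)%:R + 2^-1)
  <= pi * \sum_(x | P x) u x ^+ 2.
Proof.
move=> a0 k_inj; rewrite mulr_sumr; apply: ler_sum => x Px.
by rewrite -mulr_sumr mulrC ler_wpM2r ?sqr_ge0 // sum_schur_weight_inj_le ?a0.
Qed.

Lemma hilbert_ineq (T : finType) (P : pred T) (g : T -> nat) (i : nat) (u : T -> R) :
  {in P &, injective g} ->
  \sum_(x | P x && (g x <= i)%N) \sum_(y | P y && (i < g y)%N) 2 * u x * u y / (g y - g x)%:R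
  <= pi * \sum_(x | P x) u x ^+ 2.
Proof.
(* x and y lie at the half-integer distances [A x] and [B y] from the cut i + 1/2. *)
move=> g_inj; pose A x : R := (i - g x)%:R + 2^-1; pose B y : R := (g y - i.+1)%:R + 2^-1.
have A0 x : 0 < A x by rewrite /A; have := ler0n R (i - g x); lra.
have B0 y : 0 < B y by rewrite /B; have := ler0n R (g y - i.+1); lra.
pose Pl x := P x && (g x <= i)%N; pose Pr y := P y && (i < g y)%N.
have amgm : \sum_(x | Pl x) \sum_(y | Pr y) 2 * u x * u y / (g y - g x)%:R
    <= \sum_(x | Pl x) \sum_(y | Pr y) (u x ^+ 2 * schur_weight (A x) (B y)
                                      + u y ^+ 2 * schur_weight (B y) (A x)).
  apply: ler_sum => x /andP[_ xi]; apply: ler_sum => y /andP[_ iy].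
  have -> : (g y - g x)%:R = A x + B y :> R.
    have -> : (g y - g x = (i - g x) + (g y - i.+1) + 1)%N by lia.
    by rewrite !natrD /A /B; lra.
  exact: schur_amgm.
apply: le_trans amgm _.
under eq_bigr do rewrite big_split /=.
rewrite big_split /= [X in _ + X <= _]exchange_big /=.
have left_rows := @sum_rows_schur_le _ Pl Pr A (fun y => g y - i.+1)%N u.
have right_rows := @sum_rows_schur_le _ Pr Pl B (fun x => i - g x)%N u.
rewrite [X in _ <= _ * X](bigID (fun x => g x <= i)%N) /= mulrDr.
apply: lerD.
- apply: left_rows => [x _ | y1 y2]; first exact: A0.
  by move=> /andP[P1 i1] /andP[P2 i2] e; apply: g_inj => //; lia.
- rewrite [X in _ <= _ * X](eq_bigl Pr); last by move=> x; rewrite /= -ltnNge.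
  apply: right_rows => [y _ | x1 x2]; first exact: B0.
  by move=> /andP[P1 i1] /andP[P2 i2] e; apply: g_inj => //; lia.
Qed.
End HilbertInequality.

Section OracleDefect.
Variables (R : realType) (N : nat).
Hypothesis N_gt0 : (0 < N)%N.
Implicit Types (x y : {ffun 'I_N -> bool}) (a b : R[i]).

Lemma conj_flip_sub (s t : bool) a b :
  a^* * b - (if s then - a else a)^* * (if t then - b else b)
  = if s == t then 0 else 2 * (a^* * b).
Proof.
by case: s; case: t; rewrite /= ?rmorphN ?mulNr ?mulrN ?opprK ?subrr // mulr_natl mulr2n.
Qed.

Lemma omega_oracle_defect x y (i : nat) a b : inS x -> inS y ->
  (omega R x y)%:C * (a^* * b - (if bit x i then - a else a)^* * (if bit y i then - b else b))
  = if (f x <= i < f y)%N then (2 / (f y - f x)%:R)%:C * (a^* * b) else 0.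
Proof.
move=> Sx Sy; have fyN := f_lt N_gt0 Sy.
rewrite conj_flip_sub !bit_inS // /omega.
case: ifP => [/andP[xy _] | not_xy]; last first.
  rewrite mul0r; case: ifP => // /andP[xi iy].
  by move: not_xy; rewrite fyN andbT (leq_ltn_trans xi iy).
have -> : ((f x <= i < N) == (f y <= i < N))%N = ~~ (f x <= i < f y)%N.
  by case: leqP => ?; case: leqP => ?; case: ltnP => ? //=; lia.
case: (boolP (f x <= i < f y)%N) => _ /=; last by rewrite mulr0.
by rewrite rmorphM rmorph_nat mulrCA mulrA.
Qed.

Definition oracle_defect (v : {ffun 'I_N -> bool} -> state R) (p : nat * nat) : R[i] :=
  \sum_(x | inS x) \sum_(y | inS y)
     (omega R x y)%:C * ((v x p)^* * v y p - (oracle x (v x) p)^* * oracle y (v y) p).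

Lemma cabs_summable_oracle_defect v : (forall x, l2 (v x)) -> cabs_summable (oracle_defect v).
Proof.
move=> v_l2; apply: cabs_summable_big => x _; apply: cabs_summable_big => y _.
exact/cabs_summableZ/cabs_summable_oracle_gap.
Qed.

Lemma normc_oracle_defect_le v p :
  normc (oracle_defect v p) <= pi * \sum_(x | inS x) sqmod (v x p).
Proof.
pose u x := normc (v x p).
have -> : oracle_defect v p = \sum_(x | inS x && (f x <= p.2)%N) \sum_(y | inS y && (p.2 < f y)%N)
    (2 / (f y - f x)%:R)%:C * ((v x p)^* * v y p).
  rewrite /oracle_defect [RHS]big_mkcondr /=; apply: eq_bigr => x Sx.
  under eq_bigr => y Sy do rewrite /oracle omega_oracle_defect //.
  by case: leqP => xi /=; [rewrite [RHS]big_mkcondr | rewrite big1].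
have term_eq x y : normc ((2 / (f y - f x)%:R)%:C * ((v x p)^* * v y p))
    = 2 * u x * u y / (f y - f x)%:R.
  by rewrite !normcM normc_real normc_conj ger0_norm ?divr_ge0 // /u; ring.
apply: le_trans (ler_normc_sum _ _ _) _.
apply: le_trans (ler_sum _ (fun x _ => ler_normc_sum _ _ _)) _.
under eq_bigr do under eq_bigr do rewrite term_eq.
apply: le_trans (hilbert_ineq _ _ (f_inj N_gt0)) _.
by under [X in _ <= _ * X]eq_bigr do rewrite sqmod_normc.
Qed.
End OracleDefect.

Lemma W_sub_succ (R : realType) (N : nat) (U : state R -> state R) (j : nat) : unitary U ->
  W N U j - W N U j.+1 = csum (oracle_defect (fun x : {ffun 'I_N -> bool} => psi U x j)).
Proof.
move=> hU; set v := fun x : {ffun 'I_N -> bool} => psi U x j.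
have v_l2 x : l2 (v x) := l2_psi x j hU.
rewrite /oracle_defect csum_big => [|x _]; last first.
  by apply: cabs_summable_big => y _; exact/cabs_summableZ/cabs_summable_oracle_gap.
rewrite /W -sumrB; apply: eq_bigr => x _.
rewrite csum_big => [|y _]; last exact/cabs_summableZ/cabs_summable_oracle_gap.
rewrite -sumrB; apply: eq_bigr => y _.
have [Ox Oy] := (l2_oracle x (v_l2 x), l2_oracle y (v_l2 y)).
rewrite csumZ ?cabs_summable_oracle_gap // csumB ?cabs_summable_inner //.
by rewrite -mulrBr (unitary_inner hU Ox Oy).
Qed.

Theorem lemma4 (R : realType) (N T : nat) (U : state R -> state R)
  (hN : (2 <= N)%N) (hT : (1 <= T)%N) (hU : unitary U)
  (j : nat) (hj : (j < T)%N) :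
  `| W N U j - W N U j.+1 | <= ((pi : R) * N%:R)%:C%C.
Proof.
have N_gt0 : (0 < N)%N by lia.
set v := fun x : {ffun 'I_N -> bool} => psi U x j; have v_l2 x : l2 (v x) := l2_psi x j hU.
have sqmod_summable x : abs_summable (fun p => sqmod (v x p)) by apply/l2E.
rewrite W_sub_succ // norm_normc lecR.
apply: le_trans (normc_csum_le (cabs_summable_oracle_defect v_l2)) _.
apply: le_trans (ler_sumR _ _ (normc_oracle_defect_le N_gt0 v)) _.
- exact: cabs_summable_oracle_defect.
- by apply: abs_summableZ; apply: abs_summable_big.
rewrite sumRZ ?sumR_big //; last exact: abs_summable_big.
under eq_bigr do rewrite sumR_sqmod normsq_psi //=.
rewrite ler_wpM2l ?pi_ge0 // (eq_bigr (fun _ => 1%:R)) // -natr_sum sum1_card ler_nat.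
exact: card_inS.
Qed.
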